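(* Let $X$ be an infinite compact metrizable space and $h\colon X\to X$ a minimal homeomorphism. If $F\subset X$ is closed and topologically $h$-small, then $F$ is universally null.
   Context: $M_h(X)$ denotes the set of $h$-invariant Borel probability measures on $X$; a Borel set is universally null if it has measure $0$ for all $\mu\in M_h(X)$. A closed set $F\subset X$ is topologically $h$-small if there is $m\in\mathbb{Z}_{+}$ such that whenever $d(0),\dots,d(m)$ are $m+1$ distinct integers, $h^{d(0)}(F)\cap\cdots\cap h^{d(m)}(F)=\varnothing$. *)

From HB Require Import structures.
From mathcomp Require Import all_boot all_order all_algebra.
From mathcomp Require Import all_classical all_reals all_analysis.
Set Implicit Arguments. Unset Strict Implicit. Unset Printing Implicit Defensive.
Import Order.TTheory GRing.Theory Num.Theory.
Local Open Scope classical_set_scope.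
Local Open Scope ring_scope.

Definition homeomorphism_with {X : topologicalType} (h g : X -> X) : Prop :=
  cancel h g /\ cancel g h /\ continuous h /\ continuous g.

Definition minimal_map {X : topologicalType} (h : X -> X) : Prop :=
  forall Y : set X, closed Y -> h @` Y = Y -> Y = set0 \/ Y = setT.

Definition zpow_map {X : Type} (h g : X -> X) (d : int) : X -> X :=
  match d with
  | Posz n => iter n h
  | Negz n => iter n.+1 g
  end.

Definition top_small {X : topologicalType} (h g : X -> X) (F : set X) : Prop :=
  closed F /\
  exists m : nat, forall d : 'I_m.+1 -> int, injective d ->
    \bigcap_(i in [set: 'I_m.+1]) (zpow_map h g (d i) @` F) = set0.

Definition borel_of (X : ptopologicalType) := g_sigma_algebraType (@open X).

Definition invariant_prob {R : realType} {X : ptopologicalType} (h : X -> X)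
  (mu : probability (borel_of X) R) : Prop :=
  forall A : set (borel_of X), measurable A -> mu (h @^-1` A) = mu A.

Definition universally_null {R : realType} {X : ptopologicalType} (h : X -> X)
  (F : set X) : Prop :=
  forall mu : probability (borel_of X) R, invariant_prob h mu -> mu F = 0%E.

From HB Require Import structures.
From mathcomp Require Import all_boot all_order all_algebra.
From mathcomp Require Import all_classical all_reals all_analysis.
From mathcomp Require Import measurable_realfun lebesgue_integral.
Import Order.TTheory GRing.Theory Num.Theory.
Local Open Scope classical_set_scope.
Local Open Scope ring_scope.

(* If F is topologically h-small with constant m, every point lies in at most m
   of the sets h^-k(F), k >= 1, all of which have measure mu(F) for an
   invariant mu. Integrating the sum of their first N indicators gives
   N mu(F) <= m for all N, hence mu(F) = 0. *)

Definition bounded_overlap {T : Type} (m : nat) (A : nat -> set T) : Prop :=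
  forall d : 'I_m.+1 -> nat, injective d ->
    \bigcap_(i in [set: 'I_m.+1]) A (d i) = set0.

Section Iterates.
Context {T : Type} {h g : T -> T}.
Hypotheses (hK : cancel h g) (gK : cancel g h).

Lemma iterK n : cancel (iter n h) (iter n g).
Proof. by elim: n => // n IH x; rewrite iterSr iterS hK IH. Qed.

Lemma iterVK n : cancel (iter n g) (iter n h).
Proof. by elim: n => // n IH x; rewrite iterSr iterS gK IH. Qed.

Lemma image_iterV n (A : set T) : iter n g @` A = iter n h @^-1` A.
Proof.
apply/seteqP; split => [x [y Ay <-]|x Ax]; first by rewrite /preimage /= iterVK.
by exists (iter n h x); rewrite ?iterK.
Qed.

End Iterates.

Lemma continuous_iter {T : topologicalType} {h : T -> T} :
  continuous h -> forall n, continuous (iter n h).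
Proof.
move=> hc n; elim: n => [|n IH] x /=; first exact: cvg_id.
exact: continuous_comp (IH x) (hc _).
Qed.

Lemma closed_preimage_iter {T : topologicalType} {h : T -> T} n {C : set T} :
  continuous h -> closed C -> closed (iter n h @^-1` C).
Proof.
by move=> hc; move/continuous_closedP: (continuous_iter hc n); apply.
Qed.

Lemma closed_borel_measurable (X : ptopologicalType) (C : set X) :
  closed C -> measurable (C : set (borel_of X)).
Proof.
move=> cC; rewrite -[C]setCK; apply: measurableC.
by apply: sub_sigma_algebra; exact: closed_openC.
Qed.

Lemma invariant_prob_iter {R : realType} {X : ptopologicalType} {h : X -> X}
    {mu : probability (borel_of X) R} n {C : set X} :
  invariant_prob h mu -> continuous h -> closed C ->
  mu (iter n h @^-1` C) = mu C.
Proof.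
move=> inv hc cC; elim: n => // n IH.
have -> : iter n.+1 h @^-1` C = h @^-1` (iter n h @^-1` C).
  by apply/funext => x; rewrite /preimage /= -iterS iterSr.
rewrite inv ?IH //; apply: closed_borel_measurable.
exact: closed_preimage_iter.
Qed.

Lemma sum_indic_le {R : realType} {T : Type} {A : nat -> set T} {m : nat} N x :
  bounded_overlap m A -> \sum_(k < N) \1_(A k) x <= m%:R :> R.
Proof.
move=> overlap.
rewrite (eq_bigr (fun k : 'I_N => if x \in A k then 1 else 0)); last first.
  by move=> k _; rewrite indicE; case: (x \in A k).
rewrite -big_mkcond /= sumr_const ler_nat.
set S := [pred k : 'I_N | x \in A k].
rewrite (_ : #|_| = #|S|); last by apply: eq_card => k; rewrite !inE.
rewrite leqNgt; apply/negP => Nm.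
pose e := [seq val k | k <- enum S].
have size_e : size e = #|S| by rewrite size_map -cardE.
have uniq_e : uniq e by rewrite map_inj_uniq ?enum_uniq //; exact: val_inj.
have lt_e (i : 'I_m.+1) : (i < size e)%N by rewrite size_e (leq_trans _ Nm).
have d_inj : injective (fun i : 'I_m.+1 => nth 0%N e i).
  by move=> i j /eqP; rewrite nth_uniq // => /eqP/val_inj.
apply/eqP: (overlap _ d_inj); apply/set0P; exists x => i _ /=.
have /mapP[k] : nth 0%N e i \in e by rewrite mem_nth.
by rewrite mem_enum inE => Ak ->; exact: Ak.
Qed.

Lemma measure_overlap_le {R : realType} {d} {T : measurableType d}
    {mu : probability T R} {A : nat -> set T} {c : \bar R} {m : nat} N :
  (forall k, measurable (A k)) -> (forall k, mu (A k) = c) ->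
  bounded_overlap m A -> (N%:R%:E * c <= m%:R%:E)%E.
Proof.
move=> mA muA overlap.
have mI k : measurable_fun setT (EFin \o (\1_(A k) : T -> R)).
  exact/measurable_EFinP/measurable_indic.
have -> : (N%:R%:E * c = \int[mu]_x (\sum_(k < N) (\1_(A k) x)%:E))%E.
  rewrite ge0_integral_sum //; last by move=> k; exact: mI.
  under eq_bigr do rewrite integral_indic // setIT.
  rewrite (eq_bigr (fun=> c)); last by move=> k _; exact: muA.
  by rewrite sumr_const card_ord mule_natl.
have -> : ((m%:R : R)%:E = \int[mu]_x (cst (m%:R : R)%:E x))%E.
  rewrite integral_cst //.
  by rewrite -[LHS]mule1; congr (_ * _)%E; exact/esym/probability_setT.
apply: ge0_le_integral => //.
- by move=> x _; apply: sume_ge0 => k _; rewrite lee_fin indicE.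
- by apply: emeasurable_sum => k; exact: mI.
- by move=> x _; rewrite sumEFin lee_fin sum_indic_le.
Qed.

Lemma nat_mul_bounded_eq0 {R : realType} {x : \bar R} (c : R) :
  (0 <= x)%E -> (forall N : nat, N%:R%:E * x <= c%:E)%E -> x = 0%E.
Proof.
case: x => [r||] // r0 bound; last by have := bound 1%N; rewrite mul1e.
move: r0; rewrite lee_fin le0r => /orP[/eqP -> //|r_gt0]; exfalso.
have := bound (Num.truncn (c / r)).+1; rewrite -EFinM lee_fin -ler_pdivlMr //.
by rewrite leNgt truncnS_gt.
Qed.

Lemma top_small_overlap {X : topologicalType} {h g : X -> X} {F : set X} :
  cancel h g -> cancel g h -> top_small h g F ->
  exists m, bounded_overlap m (fun k => iter k.+1 h @^-1` F).
Proof.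
move=> hK gK [_ [m small]]; exists m => d d_inj.
have negd_inj : injective (fun i => Negz (d i)) by move=> i j [] /d_inj.
rewrite -(small _ negd_inj); apply: eq_bigcapr => i _.
by rewrite /zpow_map (image_iterV hK gK).
Qed.

Theorem corollary3p12 (R : realType) (X : pseudoPMetricType R) (h g : X -> X)
  (F : set X) :
  hausdorff_space X -> compact [set: X] -> ~ finite_set [set: X] ->
  homeomorphism_with h g -> minimal_map h ->
  top_small h g F -> universally_null (R := R) h F.
Proof.
move=> _ _ _ [hK [gK [hc _]]] _ smallF mu inv.
have cF : closed F by case: smallF.
have [m overlap] := top_small_overlap hK gK smallF.
pose A k : set (borel_of X) := iter k.+1 h @^-1` F.
have mA k : measurable (A k).
  by apply: closed_borel_measurable; exact: closed_preimage_iter.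
apply: (nat_mul_bounded_eq0 m%:R) => // N.
apply: (measure_overlap_le (mu := mu) (A := A) (c := mu F) N mA _ overlap) => k.
exact: invariant_prob_iter.
Qed.
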